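(* Assume $T_B\colon\mathcal D(T_B)\to Y_B$ is bijective. Then for each $n\in\mathbb Z$, $X=X(n)\oplus Z(n)$.
   Context: $B$ is an admissible Banach sequence space: a complete normed space $B$ of real sequences $(s_n)_{n\in\mathbb Z}$ such that $\mathbf{s}'\in B$, $|s_n|\le|s'_n|$ for all $n$ imply $\mathbf{s}\in B$, $\|\mathbf{s}\|_B\le\|\mathbf{s}'\|_B$; $\chi_{\{n\}}\in B$ with $\|\chi_{\{n\}}\|_B>0$ for all $n$; and shifts $(s_{n+m})_n$ of elements of $B$ are in $B$ with norm at most $N\|\mathbf{s}\|_B$ for a fixed $N>0$. $X$ is a Banach space with norms $\|\cdot\|_n$ ($n\in\mathbb Z$) each equivalent to its norm; $(A_m)_{m\in\mathbb Z}$ are bounded linear operators on $X$. $Y_B$ is the Banach space of sequences $\mathbf{x}=(x_n)_{n\in\mathbb Z}$ in $X$ with $(\|x_n\|_n)_n\in B$, normed by $\|(\|x_n\|_n)_n\|_B$; $(T_B\mathbf{x})_n=x_n-A_{n-1}x_{n-1}$ on $\mathcal D(T_B)=\{\mathbf{x}\in Y_B:T_B\mathbf{x}\in Y_B\}$. For $n\in\mathbb Z$, $X(n)$ is the set of $x\in X$ for which there is $\mathbf{x}=(x_m)_m\in Y_B$ with $x_n=x$ and $x_m=A_{m-1}x_{m-1}$ for all $m>n$; $Z(n)$ is the set of $x\in X$ for which there is $\mathbf{z}=(z_m)_m\in Y_B$ with $z_n=x$ and $z_m=A_{m-1}z_{m-1}$ for all $m\le n$. *)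

From Stdlib Require Import Reals Lra ZArith.
Open Scope R_scope.

Record RBanach := mkRBanach {
  car :> Type;
  vzero : car;
  vadd : car -> car -> car;
  vopp : car -> car;
  vscal : R -> car -> car;
  vnorm : car -> R;
  vadd_assoc : forall x y z, vadd x (vadd y z) = vadd (vadd x y) z;
  vadd_comm : forall x y, vadd x y = vadd y x;
  vadd_0 : forall x, vadd x vzero = x;
  vadd_opp : forall x, vadd x (vopp x) = vzero;
  vscal_1 : forall x, vscal 1 x = x;
  vscal_assoc : forall a b x, vscal a (vscal b x) = vscal (a * b) x;
  vscal_distr_v : forall a x y, vscal a (vadd x y) = vadd (vscal a x) (vscal a y);
  vscal_distr_s : forall a b x, vscal (a + b) x = vadd (vscal a x) (vscal b x);
  vnorm_eq0 : forall x, vnorm x = 0 -> x = vzero;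
  vnorm_scal : forall a x, vnorm (vscal a x) = Rabs a * vnorm x;
  vnorm_triangle : forall x y, vnorm (vadd x y) <= vnorm x + vnorm y;
  vcomplete : forall u : nat -> car,
    (forall eps, eps > 0 -> exists K, forall p q, (p >= K)%nat -> (q >= K)%nat ->
        vnorm (vadd (u p) (vopp (u q))) < eps) ->
    exists l, forall eps, eps > 0 -> exists K, forall p, (p >= K)%nat ->
        vnorm (vadd (u p) (vopp l)) < eps
}.

Arguments vzero {r}.

Definition is_norm (X : RBanach) (N : X -> R) : Prop :=
  (forall x, N x = 0 -> x = vzero) /\
  (forall a x, N (vscal X a x) = Rabs a * N x) /\
  (forall x y, N (vadd X x y) <= N x + N y).

Definition equiv_norm (X : RBanach) (N : X -> R) : Prop :=
  exists c d, c > 0 /\ d > 0 /\ forall x, c * vnorm X x <= N x <= d * vnorm X x.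

Definition bounded_linear (X : RBanach) (L : X -> X) : Prop :=
  (forall x y, L (vadd X x y) = vadd X (L x) (L y)) /\
  (forall a x, L (vscal X a x) = vscal X a (L x)) /\
  (exists M, forall x, vnorm X (L x) <= M * vnorm X x).

Definition chi (n : Z) : Z -> R := fun m => if Z.eq_dec m n then 1 else 0.

(* Admissible Banach sequence space: inB is the set B (a set of real
   sequences indexed by Z), normB its norm. *)
Definition admissible (inB : (Z -> R) -> Prop) (normB : (Z -> R) -> R) : Prop :=
  inB (fun _ => 0) /\
  (forall s t, inB s -> inB t -> inB (fun n => s n + t n)) /\
  (forall a s, inB s -> inB (fun n => a * s n)) /\
  (forall s, inB s -> normB s = 0 -> forall n, s n = 0) /\
  (forall a s, inB s -> normB (fun n => a * s n) = Rabs a * normB s) /\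
  (forall s t, inB s -> inB t -> normB (fun n => s n + t n) <= normB s + normB t) /\
  (forall u : nat -> Z -> R, (forall k, inB (u k)) ->
    (forall eps, eps > 0 -> exists K, forall p q, (p >= K)%nat -> (q >= K)%nat ->
        normB (fun n => u p n - u q n) < eps) ->
    exists l, inB l /\ forall eps, eps > 0 -> exists K, forall p, (p >= K)%nat ->
        normB (fun n => u p n - l n) < eps) /\
  (forall s s', inB s' -> (forall n, Rabs (s n) <= Rabs (s' n)) ->
     inB s /\ normB s <= normB s') /\
  (forall n, inB (chi n) /\ normB (chi n) > 0) /\
  (exists N, N > 0 /\ forall s m, inB s ->
     inB (fun n => s (n + m)%Z) /\ normB (fun n => s (n + m)%Z) <= N * normB s).

Definition inY (X : RBanach) (nrm : Z -> X -> R) (inB : (Z -> R) -> Prop)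
  (x : Z -> X) : Prop := inB (fun n => nrm n (x n)).

Definition TB (X : RBanach) (A : Z -> X -> X) (x : Z -> X) : Z -> X :=
  fun n => vadd X (x n) (vopp X (A (n - 1)%Z (x (n - 1)%Z))).

Definition domTB (X : RBanach) (nrm : Z -> X -> R) (inB : (Z -> R) -> Prop)
  (A : Z -> X -> X) (x : Z -> X) : Prop :=
  inY X nrm inB x /\ inY X nrm inB (TB X A x).

Definition TB_bijective (X : RBanach) (nrm : Z -> X -> R) (inB : (Z -> R) -> Prop)
  (A : Z -> X -> X) : Prop :=
  (forall x1 x2, domTB X nrm inB A x1 -> domTB X nrm inB A x2 ->
     TB X A x1 = TB X A x2 -> x1 = x2) /\
  (forall y, inY X nrm inB y -> exists x, domTB X nrm inB A x /\ TB X A x = y).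

Definition Xsub (X : RBanach) (nrm : Z -> X -> R) (inB : (Z -> R) -> Prop)
  (A : Z -> X -> X) (n : Z) (x : X) : Prop :=
  exists xs : Z -> X, inY X nrm inB xs /\ xs n = x /\
    forall m, (m > n)%Z -> xs m = A (m - 1)%Z (xs (m - 1)%Z).

Definition Zsub (X : RBanach) (nrm : Z -> X -> R) (inB : (Z -> R) -> Prop)
  (A : Z -> X -> X) (n : Z) (x : X) : Prop :=
  exists zs : Z -> X, inY X nrm inB zs /\ zs n = x /\
    forall m, (m <= n)%Z -> zs m = A (m - 1)%Z (zs (m - 1)%Z).

Definition direct_sum (X : RBanach) (U V : X -> Prop) : Prop :=
  (forall x : X, exists u v, U u /\ V v /\ x = vadd X u v) /\
  (forall x : X, U x -> V x -> x = vzero).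

(** A vector [x] is split by solving [T_B u = y], where [y] is concentrated
    at time [n+1] with value [A_n x]: then [u] is an orbit of [A] except at
    [n+1], and [x = (u_n + x) - u_n] with [u_n + x] continuing forward and
    [- u_n] continuing backward as orbits in [Y_B].  Conversely, a vector in
    both subspaces lets one glue a backward and a forward orbit into a full
    orbit [w] in [Y_B]; then [T_B w = 0], and injectivity forces [w = 0]. *)

From Stdlib Require Import Reals ZArith Lra Lia FunctionalExtensionality.
Open Scope R_scope.

Section VectorAlgebra.

Variable X : RBanach.

Lemma vadd_cancel_l (a b c : X) : vadd X a b = vadd X a c -> b = c.
Proof.
  intro H.
  assert (H0 : vadd X (vopp X a) (vadd X a b) = vadd X (vopp X a) (vadd X a c))
    by now rewrite H.
  rewrite !vadd_assoc, (vadd_comm X (vopp X a) a), vadd_opp,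
    !(vadd_comm X vzero), !vadd_0 in H0.
  exact H0.
Qed.

Lemma vsub_eq (a b c : X) : vadd X a (vopp X b) = c -> a = vadd X c b.
Proof.
  intros <-.
  now rewrite <- vadd_assoc, (vadd_comm X (vopp X b) b), vadd_opp, vadd_0.
Qed.

Lemma vscal_0 (x : X) : vscal X 0 x = vzero.
Proof.
  apply eq_sym, (vadd_cancel_l (vscal X 0 x)).
  rewrite vadd_0, <- vscal_distr_s.
  now rewrite Rplus_0_r.
Qed.

Lemma vopp_scal (x : X) : vopp X x = vscal X (-1) x.
Proof.
  apply (vadd_cancel_l x).
  rewrite vadd_opp.
  assert (Hsum : vadd X (vscal X 1 x) (vscal X (-1) x) = vzero).
  { rewrite <- vscal_distr_s, Rplus_opp_r. apply vscal_0. }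
  now rewrite vscal_1 in Hsum.
Qed.

Lemma norm_zero (N : X -> R) : is_norm X N -> N vzero = 0.
Proof.
  intros [_ [Hscal _]].
  rewrite <- (vscal_0 vzero), Hscal, Rabs_R0; ring.
Qed.

Lemma norm_opp (N : X -> R) (x : X) : is_norm X N -> N (vopp X x) = N x.
Proof.
  intros [_ [Hscal _]].
  rewrite vopp_scal, Hscal, Rabs_left by lra. ring.
Qed.

Lemma norm_nonneg (N : X -> R) (x : X) : is_norm X N -> 0 <= N x.
Proof.
  intros HN.
  pose proof (proj2 (proj2 HN) x (vopp X x)) as Htri.
  rewrite vadd_opp, norm_zero, norm_opp in Htri by exact HN.
  lra.
Qed.

Lemma additive_zero (L : X -> X) :
  (forall x y, L (vadd X x y) = vadd X (L x) (L y)) -> L vzero = vzero.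
Proof.
  intro Ladd. apply (vadd_cancel_l (L vzero)).
  now rewrite <- Ladd, !vadd_0.
Qed.

Lemma additive_opp (L : X -> X) (x : X) :
  (forall x y, L (vadd X x y) = vadd X (L x) (L y)) ->
  L (vopp X x) = vopp X (L x).
Proof.
  intro Ladd. apply (vadd_cancel_l (L x)).
  rewrite <- Ladd, !vadd_opp.
  exact (additive_zero L Ladd).
Qed.

End VectorAlgebra.

Section SequenceSpace.

Variable X : RBanach.
Variable nrm : Z -> X -> R.
Variable inB : (Z -> R) -> Prop.

Hypothesis nrm_norm : forall n, is_norm X (nrm n).
Hypothesis inB_zero : inB (fun _ => 0).
Hypothesis inB_add : forall s t, inB s -> inB t -> inB (fun n => s n + t n).
Hypothesis inB_scal : forall a s, inB s -> inB (fun n => a * s n).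
Hypothesis inB_solid : forall s s', inB s' ->
  (forall n, Rabs (s n) <= Rabs (s' n)) -> inB s.
Hypothesis inB_chi : forall n, inB (chi n).

Definition update (x : Z -> X) (k : Z) (v : X) : Z -> X :=
  fun m => if Z.eq_dec m k then v else x m.

Definition glue (z x : Z -> X) (n : Z) : Z -> X :=
  fun m => if Z_lt_le_dec m n then z m else x m.

Lemma inY_dominated (x : Z -> X) (s : Z -> R) :
  inB s -> (forall m, nrm m (x m) <= s m) -> inY X nrm inB x.
Proof.
  intros Hs Hle. apply (inB_solid _ s Hs). intro m.
  rewrite Rabs_right by (apply Rle_ge, norm_nonneg, nrm_norm).
  eapply Rle_trans; [apply Hle | apply Rle_abs].
Qed.

Lemma inY_zero : inY X nrm inB (fun _ => vzero).
Proof.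
  apply (inY_dominated _ _ inB_zero). intro m.
  rewrite norm_zero by apply nrm_norm. apply Rle_refl.
Qed.

Lemma inY_opp (x : Z -> X) :
  inY X nrm inB x -> inY X nrm inB (fun m => vopp X (x m)).
Proof.
  intro Hx. apply (inY_dominated _ _ Hx). intro m.
  rewrite norm_opp by apply nrm_norm. apply Rle_refl.
Qed.

Lemma inY_update (x : Z -> X) (k : Z) (v : X) :
  inY X nrm inB x -> inY X nrm inB (update x k v).
Proof.
  intro Hx.
  apply (inY_dominated _ (fun m => nrm m (x m) + nrm k v * chi k m)).
  - apply inB_add; [exact Hx | apply inB_scal, inB_chi].
  - intro m. unfold update, chi. destruct (Z.eq_dec m k) as [->|].
    + pose proof (norm_nonneg X _ (x k) (nrm_norm k)). lra.
    + rewrite Rmult_0_r, Rplus_0_r. apply Rle_refl.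
Qed.

Lemma inY_glue (z x : Z -> X) (n : Z) :
  inY X nrm inB z -> inY X nrm inB x -> inY X nrm inB (glue z x n).
Proof.
  intros Hz Hx.
  apply (inY_dominated _ (fun m => nrm m (x m) + nrm m (z m))).
  - now apply inB_add.
  - intro m. pose proof (norm_nonneg X _ (x m) (nrm_norm m)).
    pose proof (norm_nonneg X _ (z m) (nrm_norm m)).
    unfold glue. destruct (Z_lt_le_dec m n); lra.
Qed.

Variable A : Z -> X -> X.
Hypothesis A_add : forall m x y, A m (vadd X x y) = vadd X (A m x) (A m y).

Lemma TB_orbit (w : Z -> X) :
  (forall m, w m = A (m - 1)%Z (w (m - 1)%Z)) -> TB X A w = fun _ => vzero.
Proof.
  intro Horb. apply functional_extensionality. intro m.
  unfold TB. rewrite <- Horb. apply vadd_opp.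
Qed.

Lemma orbit_in_Y_zero (w : Z -> X) :
  (forall x1 x2, domTB X nrm inB A x1 -> domTB X nrm inB A x2 ->
     TB X A x1 = TB X A x2 -> x1 = x2) ->
  inY X nrm inB w -> (forall m, w m = A (m - 1)%Z (w (m - 1)%Z)) ->
  w = fun _ => vzero.
Proof.
  intros Hinj Hw Horb.
  assert (Hzero_orbit : forall m, @vzero X = A (m - 1)%Z vzero)
    by (intro m; symmetry; apply additive_zero, A_add).
  apply Hinj.
  - split; [exact Hw|]. rewrite TB_orbit by exact Horb. exact inY_zero.
  - split; [exact inY_zero|]. rewrite TB_orbit by exact Hzero_orbit.
    exact inY_zero.
  - now rewrite !TB_orbit.
Qed.

Lemma Xsub_Zsub_trivial (n : Z) (x : X) :
  (forall x1 x2, domTB X nrm inB A x1 -> domTB X nrm inB A x2 ->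
     TB X A x1 = TB X A x2 -> x1 = x2) ->
  Xsub X nrm inB A n x -> Zsub X nrm inB A n x -> x = vzero.
Proof.
  intros Hinj [xs [Hxs [Hxn Hxorb]]] [zs [Hzs [Hzn Hzorb]]].
  assert (Hglue_orbit : forall m,
    glue zs xs n m = A (m - 1)%Z (glue zs xs n (m - 1)%Z)).
  { intro m. unfold glue.
    destruct (Z_lt_le_dec m n), (Z_lt_le_dec (m - 1) n); try lia.
    - apply Hzorb; lia.
    - replace m with n by lia. rewrite Hxn, <- Hzn. apply Hzorb; lia.
    - apply Hxorb; lia. }
  pose proof (orbit_in_Y_zero _ Hinj (inY_glue _ _ n Hzs Hxs) Hglue_orbit)
    as Hglue0.
  pose proof (f_equal (fun f => f n) Hglue0) as Hn. simpl in Hn.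
  unfold glue in Hn. destruct (Z_lt_le_dec n n); [lia|].
  now rewrite <- Hxn.
Qed.

Lemma Xsub_Zsub_span (n : Z) (x : X) :
  (forall y, inY X nrm inB y -> exists u, domTB X nrm inB A u /\ TB X A u = y) ->
  exists u v, Xsub X nrm inB A n u /\ Zsub X nrm inB A n v /\ x = vadd X u v.
Proof.
  intro Hsurj.
  set (y := update (fun _ => vzero) (n + 1) (A n x)).
  destruct (Hsurj y (inY_update _ _ _ inY_zero)) as [u [[Hu _] HTu]].
  assert (Hstep : forall m,
    u m = vadd X (y m) (A (m - 1)%Z (u (m - 1)%Z))).
  { intro m. apply vsub_eq. exact (f_equal (fun f => f m) HTu). }
  assert (Horb : forall m, m <> (n + 1)%Z -> u m = A (m - 1)%Z (u (m - 1)%Z)).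
  { intros m Hm. rewrite Hstep. unfold y, update.
    destruct (Z.eq_dec m (n + 1)); [contradiction|].
    now rewrite vadd_comm, vadd_0. }
  exists (vadd X (u n) x), (vopp X (u n)). split; [|split].
  - exists (update u n (vadd X (u n) x)). split; [|split].
    + now apply inY_update.
    + unfold update. now destruct (Z.eq_dec n n).
    + intros m Hm. unfold update.
      destruct (Z.eq_dec m n); [lia|].
      destruct (Z.eq_dec (m - 1) n) as [Hprev|]; [|apply Horb; lia].
      rewrite Hstep, Hprev. unfold y, update.
      destruct (Z.eq_dec m (n + 1)); [|lia].
      now rewrite A_add, vadd_comm.
  - exists (fun m => vopp X (u m)). split; [|split].
    + now apply inY_opp.
    + reflexivity.
    + intros m Hm. rewrite (Horb m) by lia.
      symmetry. apply additive_opp, A_add.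
  - now rewrite (vadd_comm X (u n) x), <- vadd_assoc, vadd_opp, vadd_0.
Qed.

End SequenceSpace.

Theorem lemma3p5 (X : RBanach) (nrm : Z -> X -> R)
  (inB : (Z -> R) -> Prop) (normB : (Z -> R) -> R) (A : Z -> X -> X)
  (HB : admissible inB normB)
  (Hnrm : forall n, is_norm X (nrm n) /\ equiv_norm X (nrm n))
  (HA : forall m, bounded_linear X (A m))
  (HT : TB_bijective X nrm inB A) :
  forall n : Z, direct_sum X (Xsub X nrm inB A n) (Zsub X nrm inB A n).
Proof.
  destruct HB as [inB_zero [inB_add [inB_scal [_ [_ [_ [_ [Hsolid [Hchi _]]]]]]]]].
  assert (nrm_norm : forall n, is_norm X (nrm n)) by (intro n; apply Hnrm).
  assert (inB_solid : forall s s', inB s' ->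
    (forall n, Rabs (s n) <= Rabs (s' n)) -> inB s)
    by (intros s s' Hs' Hle; exact (proj1 (Hsolid s s' Hs' Hle))).
  assert (inB_chi : forall n, inB (chi n)) by (intro n; apply Hchi).
  assert (A_add : forall m x y, A m (vadd X x y) = vadd X (A m x) (A m y))
    by (intro m; apply HA).
  destruct HT as [Hinj Hsurj].
  intro n. split.
  - intro x. now apply Xsub_Zsub_span.
  - intro x. now apply Xsub_Zsub_trivial.
Qed.
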